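(* Let $d=4$ and consider the channel $\mathcal C(\rho)=\sum_{k=1}^4\langle k|\rho|k\rangle\,\gamma_k$ with $\gamma_1=|1\rangle\langle1|$, $\gamma_2=\tfrac13|2\rangle\langle2|+\tfrac23|1\rangle\langle1|$, $\gamma_3=\tfrac23|2\rangle\langle2|+\tfrac13|1\rangle\langle1|$, $\gamma_4=|2\rangle\langle2|$. Then $\mathcal C$ maps every passive state to a passive state, and for $\rho=\tfrac13(|1\rangle\langle1|+|3\rangle\langle3|+|4\rangle\langle4|)$ one has $\mathsf{Erg}(\rho)=(E_4-E_2)/3$ and $\mathsf{Erg}(\mathcal C(\rho))=(E_2-E_1)/9$. Consequently, whenever $E_2-E_1>3(E_4-E_2)$, $\mathcal C$ is passivity-preserving but strictly increases the ergotropy of $\rho$.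
   Context: $S$ is a $d$-dimensional quantum system with non-degenerate Hamiltonian $H=\sum_{i=1}^d E_i|i\rangle\langle i|$, $E_1<\dots<E_d$. The ergotropy of a state $\rho$ is $\mathsf{Erg}(\rho)=\mathrm{Tr}[H\rho]-\min_U\mathrm{Tr}[HU\rho U^\dagger]$ (minimum over unitaries). A state is passive if it is of the form $\sum_i p_i|i\rangle\langle i|$ with $p_1\ge\dots\ge p_d$ (equivalently, it has zero ergotropy). *)

From HB Require Import structures.
From mathcomp Require Import all_boot all_order all_algebra.
From mathcomp Require Import classical_sets reals.
From mathcomp Require Import complex.
Set Implicit Arguments. Unset Strict Implicit. Unset Printing Implicit Defensive.
Import Order.TTheory GRing.Theory Num.Theory.
Local Open Scope ring_scope.

Section Quantum.
Variable R : realType.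
Local Notation C := R[i].

Definition adj {m n} (A : 'M[C]_(m, n)) : 'M[C]_(n, m) := (map_mx (fun z : C => z^*) A)^T.

Definition unitary {n} (U : 'M[C]_n) : Prop := U *m adj U = 1%:M.

Definition is_state {n} (rho : 'M[C]_n) : Prop :=
  [/\ adj rho = rho,
      forall v : 'cV[C]_n, 0 <= ((adj v) *m rho *m v) 0 0
    & \tr rho = 1].

Definition hamiltonian {n} (E : 'I_n -> R) : 'M[C]_n :=
  diag_mx (\row_i ((E i)%:C)%C).

(* energy Tr[H rho] (a real number for hermitian H, rho) *)
Definition energy {n} (E : 'I_n -> R) (rho : 'M[C]_n) : R :=
  complex.Re (\tr (hamiltonian E *m rho)).

Definition ergotropy {n} (E : 'I_n -> R) (rho : 'M[C]_n) : R :=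
  energy E rho -
  inf [set e : R | exists U : 'M[C]_n, unitary U /\ e = energy E (U *m rho *m adj U)].

Definition passive {n} (rho : 'M[C]_n) : Prop :=
  is_state rho /\
  exists p : 'I_n -> R,
    rho = diag_mx (\row_i ((p i)%:C)%C) /\
    (forall i j : 'I_n, (i <= j)%N -> p j <= p i).

(* |k><k| in C^4, with the paper's label k in 1..4 being ordinal k-1 *)
Definition proj4 (k : 'I_4) : 'M[C]_4 := delta_mx k k.

Definition ket1 : 'I_4 := @Ordinal 4 0 erefl.
Definition ket2 : 'I_4 := @Ordinal 4 1 erefl.
Definition ket3 : 'I_4 := @Ordinal 4 2 erefl.
Definition ket4 : 'I_4 := @Ordinal 4 3 erefl.

Definition gamma (k : 'I_4) : 'M[C]_4 :=
  if k == ket1 then proj4 ket1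
  else if k == ket2 then (1/3) *: proj4 ket2 + (2/3) *: proj4 ket1
  else if k == ket3 then (2/3) *: proj4 ket2 + (1/3) *: proj4 ket1
  else proj4 ket2.

Definition channel (rho : 'M[C]_4) : 'M[C]_4 :=
  \sum_(k < 4) rho k k *: gamma k.

Definition rho0 : 'M[C]_4 :=
  (1/3) *: (proj4 ket1 + proj4 ket3 + proj4 ket4).

End Quantum.

From HB Require Import structures.
From mathcomp Require Import all_boot all_order all_algebra fingroup perm.
From mathcomp Require Import classical_sets reals complex.
From mathcomp Require Import ring lra.
Set Implicit Arguments. Unset Strict Implicit. Unset Printing Implicit Defensive.
Import Order.TTheory GRing.Theory Num.Theory.
Local Open Scope ring_scope.

(* The central general fact, [ergotropy_diag], computes their ergotropy: for a
   nondecreasing spectrum E and a permutation s sorting d nonincreasingly,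
     Erg(diag d) = sum_i E_i d_i - sum_i E_i d_(s i).
   The permutation unitary of s attains the minimal energy.  Conversely, for
   any unitary U the energy of U diag(d) U^dagger is sum_i E_i (W d)_i with
   W_ij = |U_ij|^2 doubly stochastic, and a rearrangement inequality for
   doubly stochastic matrices ([rearrangement]: W d is majorized by d, and
   summation by parts against the nondecreasing E) bounds it from below.

   Finally C is computed on diagonal
   states ([channel_diag]): it preserves nonnegativity, normalization and
   monotonicity of the populations, hence passivity, and the two ergotropies of
   the theorem follow from [ergotropy_diag] with s = (2 4) for rho0 and
   s = (1 2) for C(rho0). *)

Section Rearrangement.
Variable R : realDomainType.

(* Summation by parts: weighted by a nondecreasing [E], a sequence [y] with
   nonpositive partial sums and zero total sum has a nonnegative sum. *)
Lemma abel_nonneg (E y : nat -> R) n :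
  (forall i, (i.+1 < n)%N -> E i <= E i.+1) ->
  (forall k, (k <= n)%N -> \sum_(i < k) y i <= 0) ->
  \sum_(i < n) y i = 0 ->
  0 <= \sum_(i < n) E i * y i.
Proof.
move=> monoE partial total.
case: n monoE partial total => [|m] monoE partial total; first by rewrite big_ord0.
suff bound k : (k < m.+1)%N -> E k * \sum_(i < k.+1) y i <= \sum_(i < k.+1) E i * y i.
  by have := bound m (ltnSn m); rewrite total mulr0.
elim: k => [_|k IHk ltkm]; first by rewrite !big_ord1.
rewrite big_ord_recr [X in _ <= X]big_ord_recr /= mulrDr lerD2r.
apply: le_trans (IHk (ltnW ltkm)).
by rewrite ler_wnM2r ?partial ?monoE // ltnW.
Qed.

Definition doubly_stochastic n (W : nat -> nat -> R) : Prop :=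
  [/\ forall i j, (i < n)%N -> (j < n)%N -> 0 <= W i j,
      forall i, (i < n)%N -> \sum_(j < n) W i j = 1
    & forall j, (j < n)%N -> \sum_(i < n) W i j = 1].

Definition nonincreasing n (d : nat -> R) : Prop :=
  forall i j, (i <= j < n)%N -> d j <= d i.

Section DoublyStochastic.
Variables (n : nat) (W : nat -> nat -> R).
Hypothesis dsW : doubly_stochastic n W.

Lemma partial_column_bounds k j : (k <= n)%N -> (j < n)%N ->
  0 <= \sum_(i < k) W i j <= 1.
Proof.
case: dsW => W0 _ cols kn jn; apply/andP; split.
  by apply: sumr_ge0 => i _; apply: W0 => //; apply: leq_trans kn.
rewrite -(cols j jn) (big_ord_widen _ (W^~ j) kn).
rewrite [X in _ <= X](bigID (fun i : 'I_n => (i < k)%N)) /=.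
by rewrite lerDl sumr_ge0 // => i _; apply: W0.
Qed.

(* Writing the difference of partial sums
   as sum_j a_j d_j with sum_j a_j = 0, the coefficients a_j change sign at
   [k], so subtracting the pivot d_(k-1) makes every term nonpositive. *)
Lemma partial_sums_majorized (d : nat -> R) k :
  nonincreasing n d -> (k <= n)%N ->
  \sum_(i < k) \sum_(j < n) W i j * d j <= \sum_(j < k) d j.
Proof.
case: (dsW) => _ rows _ dmono kn.
pose a j := \sum_(i < k) W i j - (j < k)%N%:R.
have sum_a : \sum_(j < n) a j = 0.
  rewrite sumrB exchange_big /=.
  rewrite (eq_bigr (fun=> 1)) => [|i _]; last by rewrite rows // (leq_trans _ kn).
  rewrite (big_ord_widen _ (fun=> 1) kn) big_mkcond -sumrB big1 // => i _.
  by case: ltnP; rewrite subrr.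
have sign_a j : (j < n)%N -> a j * (d j - d k.-1) <= 0.
  move=> jn; have /andP[c0 c1] := partial_column_bounds kn jn.
  rewrite /a; case: ltnP => [jk|kj].
    rewrite mulr_le0_ge0 ?subr_le0 // subr_ge0 dmono //.
    by rewrite -ltnS (ltn_predK jk) jk (leq_trans _ kn).
  rewrite subr0; have [k0|kpos] := posnP k; first by rewrite k0 big_ord0 mul0r.
  by rewrite mulr_ge0_le0 // subr_le0 dmono // jn andbT (leq_trans (leq_pred k) kj).
have -> : \sum_(i < k) \sum_(j < n) W i j * d j = \sum_(j < k) d j + \sum_(j < n) a j * d j.
  rewrite exchange_big /= (big_ord_widen _ d kn) (big_mkcond (fun j : 'I_n => (j < k)%N)) -big_split /=.
  apply: eq_bigr => j _; rewrite /a mulrBl mulr_suml.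
  by case: ltnP => _; rewrite ?mul1r ?mul0r ?subr0 ?add0r // addrC subrK.
rewrite gerDl (eq_bigr (fun j : 'I_n => a j * (d j - d k.-1) + a j * d k.-1)) => [|j _]; last first.
  by rewrite mulrBr subrK.
rewrite big_split /= -mulr_suml sum_a mul0r addr0.
by apply: sumr_le0 => j _; apply: sign_a.
Qed.
End DoublyStochastic.

Lemma doubly_stochastic_rearrangement n (E d : nat -> R) (W : nat -> nat -> R) :
  (forall i, (i.+1 < n)%N -> E i <= E i.+1) -> nonincreasing n d ->
  doubly_stochastic n W ->
  \sum_(i < n) E i * d i <= \sum_(i < n) E i * \sum_(j < n) W i j * d j.
Proof.
move=> monoE dmono dsW; rewrite -subr_ge0 -sumrB.
under eq_bigr do rewrite -mulrBr.
apply: (@abel_nonneg E (fun i => \sum_(j < n) W i j * d j - d i) n) => // [k kn|].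
  by rewrite sumrB subr_le0 partial_sums_majorized.
case: dsW => _ _ cols; rewrite sumrB exchange_big /=; apply/eqP; rewrite subr_eq0; apply/eqP.
by apply: eq_bigr => j _; rewrite -mulr_suml cols // mul1r.
Qed.

Definition extend0 n (f : 'I_n -> R) (k : nat) : R := oapp f 0 (insub k).

Lemma extend0_ord n (f : 'I_n -> R) (i : 'I_n) : extend0 f i = f i.
Proof. by rewrite /extend0 valK. Qed.

Lemma extend0_lt n (f : 'I_n -> R) k (kn : (k < n)%N) : extend0 f k = f (Ordinal kn).
Proof. exact: extend0_ord f (Ordinal kn). Qed.

Lemma rearrangement n (E d : 'I_n -> R) (W : 'I_n -> 'I_n -> R) :
  (forall i j : 'I_n, (i <= j)%N -> E i <= E j) ->
  (forall i j : 'I_n, (i <= j)%N -> d j <= d i) ->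
  (forall i j, 0 <= W i j) ->
  (forall i, \sum_j W i j = 1) -> (forall j, \sum_i W i j = 1) ->
  \sum_i E i * d i <= \sum_i E i * \sum_j W i j * d j.
Proof.
move=> monoE dmono W0 rows cols.
pose Wn i j := extend0 (fun i' => extend0 (W i') j) i.
have WnE (i j : 'I_n) : Wn i j = W i j by rewrite /Wn !extend0_ord.
have sumEd : \sum_(i < n) extend0 E i * extend0 d i = \sum_i E i * d i.
  by apply: eq_bigr => i _; rewrite !extend0_ord.
have sumEWd : \sum_(i < n) extend0 E i * \sum_(j < n) Wn i j * extend0 d j
              = \sum_i E i * \sum_j W i j * d j.
  by apply: eq_bigr => i _; rewrite extend0_ord; congr (_ * _); apply: eq_bigr => j _; rewrite WnE extend0_ord.
rewrite -sumEd -sumEWd; apply: doubly_stochastic_rearrangement.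
- by move=> i i_n; rewrite (extend0_lt _ (ltnW i_n)) (extend0_lt _ i_n) monoE.
- move=> i j /andP[ij j_n]; have i_n := leq_ltn_trans ij j_n.
  by rewrite (extend0_lt _ i_n) (extend0_lt _ j_n) dmono.
- split=> [i j i_n j_n|i i_n|j j_n].
  + by rewrite /Wn (extend0_lt _ i_n) (extend0_lt _ j_n); apply: W0.
  + by rewrite -(rows (Ordinal i_n)); apply: eq_bigr => j _; rewrite -(WnE (Ordinal i_n)).
  + by rewrite -(cols (Ordinal j_n)); apply: eq_bigr => i _; rewrite -(WnE _ (Ordinal j_n)).
Qed.
End Rearrangement.

Section DiagonalStates.
Variable R : realType.
Local Notation C := R[i].
Local Notation diagR d := (diag_mx (\row_i ((d i)%:C)%C)).

Lemma inf_attained (S : set R) m : S m -> (forall x, S x -> m <= x) -> inf S = m.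
Proof.
move=> Sm lbm; apply/le_anti/andP; split; first by apply: ge_inf => //; exists m.
by apply: lb_le_inf => //; exists m.
Qed.

Definition sqmod (z : C) : R := complex.Re z ^+ 2 + complex.Im z ^+ 2.

Lemma sqmod_ge0 z : 0 <= sqmod z.
Proof. by rewrite addr_ge0 // sqr_ge0. Qed.

Lemma Re_sum n (F : 'I_n -> C) : complex.Re (\sum_i F i) = \sum_i complex.Re (F i).
Proof. by apply: big_morph => // -[a b] [c d]. Qed.

Lemma Re_mul_conj (z : C) : complex.Re (z * Num.conj z) = sqmod z.
Proof. by case: z => a b; rewrite /sqmod /=; ring. Qed.

Lemma energy_diag n (E d : 'I_n -> R) : energy E (diagR d) = \sum_i E i * d i.
Proof.
rewrite /energy /hamiltonian mul_diag_mx /mxtrace Re_sum; apply: eq_bigr => i _.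
by rewrite !mxE eqxx mulr1n /=; ring.
Qed.

Lemma energy_unitary_orbit n (E d : 'I_n -> R) (U : 'M[C]_n) :
  energy E (U *m diagR d *m adj U) = \sum_i E i * \sum_j sqmod (U i j) * d j.
Proof.
rewrite /energy /hamiltonian mul_diag_mx /mxtrace Re_sum; apply: eq_bigr => i _.
rewrite !mxE mulr_sumr Re_sum mulr_sumr; apply: eq_bigr => j _.
rewrite mul_mx_diag !mxE; case: (U i j) => a b; rewrite /sqmod /=; ring.
Qed.

Lemma unitary_row_sums n (U : 'M[C]_n) : unitary U -> forall i, \sum_j sqmod (U i j) = 1.
Proof.
move=> hU i; have := congr1 (fun M : 'M[C]_n => complex.Re (M i i)) hU.
rewrite /= !mxE eqxx /= Re_sum => <-; apply: eq_bigr => j _.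
by rewrite !mxE Re_mul_conj.
Qed.

Lemma unitary_col_sums n (U : 'M[C]_n) : unitary U -> forall j, \sum_i sqmod (U i j) = 1.
Proof.
move=> /mulmx1C hU j; have := congr1 (fun M : 'M[C]_n => complex.Re (M j j)) hU.
rewrite /= !mxE eqxx /= Re_sum => <-; apply: eq_bigr => i _.
by rewrite !mxE mulrC Re_mul_conj.
Qed.

Lemma passive_energy_minimal n (E d : 'I_n -> R) (U : 'M[C]_n) :
  (forall i j : 'I_n, (i <= j)%N -> E i <= E j) ->
  (forall i j : 'I_n, (i <= j)%N -> d j <= d i) ->
  unitary U -> \sum_i E i * d i <= energy E (U *m diagR d *m adj U).
Proof.
move=> monoE dmono hU; rewrite energy_unitary_orbit.
apply: rearrangement => //.
- by move=> i j; apply: sqmod_ge0.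
- exact: unitary_row_sums.
- exact: unitary_col_sums.
Qed.

Lemma adj_mul m n p (A : 'M[C]_(m, n)) (B : 'M[C]_(n, p)) :
  adj (A *m B) = adj B *m adj A.
Proof.
apply/matrixP => i j; rewrite !mxE rmorph_sum; apply: eq_bigr => k _.
by rewrite !mxE rmorphM mulrC.
Qed.

Lemma unitary_mul n (U V : 'M[C]_n) : unitary U -> unitary V -> unitary (U *m V).
Proof.
by rewrite /unitary adj_mul => hU hV; rewrite mulmxA -(mulmxA U) hV mulmx1.
Qed.

Lemma adj_perm n (s : {perm 'I_n}) : adj (perm_mx s : 'M[C]_n) = perm_mx s^-1.
Proof.
rewrite /adj -tr_perm_mx; congr trmx; apply/matrixP => i j.
by rewrite !mxE conjC_nat.
Qed.

Lemma unitary_perm n (s : {perm 'I_n}) : unitary (perm_mx s : 'M[C]_n).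
Proof. by rewrite /unitary adj_perm -perm_mxM mulgV perm_mx1. Qed.

Lemma perm_conj_diag n (s : {perm 'I_n}) (d : 'I_n -> R) :
  perm_mx s *m diagR d *m adj (perm_mx s) = diagR (fun i => d (s i)).
Proof.
rewrite adj_perm -row_permE -col_permE; apply/matrixP => i j.
by rewrite !mxE (inj_eq perm_inj).
Qed.

Lemma ergotropy_diag n (E d : 'I_n -> R) (s : {perm 'I_n}) :
  (forall i j : 'I_n, (i <= j)%N -> E i <= E j) ->
  (forall i j : 'I_n, (i <= j)%N -> d (s j) <= d (s i)) ->
  ergotropy E (diagR d) = \sum_i E i * d i - \sum_i E i * d (s i).
Proof.
move=> monoE dmono; rewrite /ergotropy energy_diag; congr (_ - _).
apply: inf_attained.
  exists (perm_mx s); split; first exact: unitary_perm.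
  by rewrite perm_conj_diag energy_diag.
move=> _ [U [hU ->]].
have -> : diagR d = perm_mx s^-1 *m diagR (fun i => d (s i)) *m adj (perm_mx s^-1).
  by rewrite perm_conj_diag; congr diag_mx; apply/rowP => i; rewrite !mxE permKV.
rewrite !mulmxA -mulmxA -adj_mul.
apply: passive_energy_minimal => //.
exact: unitary_mul (unitary_perm _).
Qed.

Lemma quad_form_diag_ge0 n (v : 'cV[C]_n) (d : 'I_n -> R) :
  (forall i, 0 <= d i) -> 0 <= (adj v *m diagR d *m v) 0 0.
Proof.
move=> d0; rewrite mul_mx_diag !mxE; apply: sumr_ge0 => i _; rewrite !mxE.
by rewrite mulrAC mulr_ge0 ?ler0c // mulrC mul_conjC_ge0.
Qed.

Lemma quad_form_diag_basis n (d : 'I_n -> R) (k : 'I_n) :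
  (adj (delta_mx k 0 : 'cV[C]_n) *m diagR d *m (delta_mx k 0 : 'cV[C]_n)) 0 0 = ((d k)%:C)%C.
Proof.
rewrite mul_mx_diag !mxE (bigD1 k) //= big1 ?addr0.
  by rewrite !mxE !eqxx /= conjC1 mul1r mulr1.
by move=> i /negbTE ik; rewrite !mxE ik /= mulr0.
Qed.

Lemma diag_stateP n (q : 'I_n -> R) :
  is_state (diagR q) <-> (forall i, 0 <= q i) /\ \sum_i q i = 1.
Proof.
rewrite /is_state mxtrace_diag.
under eq_bigr do rewrite mxE.
rewrite -rmorph_sum; split => [[_ psd tr]|[q0 tr]].
  split; last by apply: (@complexI R); rewrite tr rmorph1.
  by move=> i; have := psd (delta_mx i 0); rewrite quad_form_diag_basis ler0c.
split; last by rewrite tr rmorph1.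
- apply/matrixP => i j; rewrite !mxE eq_sym.
  by case: eqP => [->|_]; rewrite ?mulr1n ?mulr0n ?conjC0 //; apply: conjc_real.
- by move=> v; apply: quad_form_diag_ge0.
Qed.
End DiagonalStates.

Lemma ord4_ind (P : 'I_4 -> Prop) :
  P ket1 -> P ket2 -> P ket3 -> P ket4 -> forall i, P i.
Proof.
move=> P1 P2 P3 P4 [[|[|[|[|//]]]] lti4].
- by rewrite (_ : Ordinal lti4 = ket1) //; apply: val_inj.
- by rewrite (_ : Ordinal lti4 = ket2) //; apply: val_inj.
- by rewrite (_ : Ordinal lti4 = ket3) //; apply: val_inj.
- by rewrite (_ : Ordinal lti4 = ket4) //; apply: val_inj.
Qed.

Lemma sum_ord4 (V : zmodType) (F : 'I_4 -> V) :
  \sum_i F i = F ket1 + F ket2 + F ket3 + F ket4.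
Proof.
rewrite !big_ord_recl big_ord0 addr0 !addrA.
by congr (F _ + F _ + F _ + F _); apply: val_inj.
Qed.

(* The linear combinations of matrix units produced by the channel and by
   rho0 are diagonal; stated over any commutative ring so that [ring] can
   check them entrywise. *)
Lemma delta_combination (K : comNzRingType) (a b c d t u : K) :
  a *: delta_mx ket1 ket1 + b *: (t *: delta_mx ket2 ket2 + u *: delta_mx ket1 ket1)
  + c *: (u *: delta_mx ket2 ket2 + t *: delta_mx ket1 ket1) + d *: delta_mx ket2 ket2
  = diag_mx (\row_j (if j == ket1 then a + b * u + c * t
                     else if j == ket2 then b * t + c * u + d else 0)) :> 'M[K]_4.
Proof.
apply/matrixP => i j; rewrite !mxE.
by elim/ord4_ind: i; elim/ord4_ind: j => /=; ring.
Qed.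

Lemma scaled_projector_sum (K : comNzRingType) (t : K) :
  t *: (delta_mx ket1 ket1 + delta_mx ket3 ket3 + delta_mx ket4 ket4)
  = diag_mx (\row_j (if j == ket2 then 0 else t)) :> 'M[K]_4.
Proof.
apply/matrixP => i j; rewrite !mxE.
by elim/ord4_ind: i; elim/ord4_ind: j => /=; ring.
Qed.

Section Counterexample.
Variable R : realType.
Local Notation C := R[i].
Local Notation diagR d := (diag_mx (\row_i ((d i)%:C)%C)).

Definition channel_populations (p : 'I_4 -> R) (i : 'I_4) : R :=
  if i == ket1 then p ket1 + 2/3 * p ket2 + 1/3 * p ket3
  else if i == ket2 then 1/3 * p ket2 + 2/3 * p ket3 + p ket4 else 0.

Lemma gamma_ket1 : gamma R ket1 = proj4 R ket1.
Proof. by []. Qed.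
Lemma gamma_ket2 : gamma R ket2 = (1/3) *: proj4 R ket2 + (2/3) *: proj4 R ket1.
Proof. by []. Qed.
Lemma gamma_ket3 : gamma R ket3 = (2/3) *: proj4 R ket2 + (1/3) *: proj4 R ket1.
Proof. by []. Qed.
Lemma gamma_ket4 : gamma R ket4 = proj4 R ket2.
Proof. by []. Qed.

Lemma channel_diag (p : 'I_4 -> R) :
  channel (diagR p) = diagR (channel_populations p).
Proof.
rewrite /channel sum_ord4 !mxE !eqxx !mulr1n gamma_ket1 gamma_ket2 gamma_ket3 gamma_ket4.
rewrite /proj4 delta_combination; congr diag_mx; apply/rowP => j; rewrite !mxE.
rewrite /channel_populations; elim/ord4_ind: j => /=; rewrite ?rmorph0 //.
all: by rewrite !rmorphD !rmorphM !fmorphV ?rmorph1 !rmorph_nat; ring.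
Qed.

Definition rho0_populations (i : 'I_4) : R := if i == ket2 then 0 else 1/3.

Lemma rho0_diag : rho0 R = diagR rho0_populations.
Proof.
rewrite /rho0 /proj4 scaled_projector_sum; congr diag_mx; apply/rowP => j.
rewrite !mxE /rho0_populations; case: ifP => _; first by rewrite rmorph0.
by rewrite fmorph_div rmorph1 rmorph_nat.
Qed.

Lemma rho0_rearranged (i j : 'I_4) : (i <= j)%N ->
  rho0_populations (tperm ket2 ket4 j) <= rho0_populations (tperm ket2 ket4 i).
Proof.
rewrite /rho0_populations.
by elim/ord4_ind: i; elim/ord4_ind: j; rewrite !permE /= => //; lra.
Qed.

Lemma channel_rho0_rearranged (i j : 'I_4) : (i <= j)%N ->
  channel_populations rho0_populations (tperm ket1 ket2 j)
  <= channel_populations rho0_populations (tperm ket1 ket2 i).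
Proof.
rewrite /channel_populations /rho0_populations.
by elim/ord4_ind: i; elim/ord4_ind: j; rewrite !permE /= => //; lra.
Qed.

Lemma channel_passive (rho : 'M[C]_4) : passive rho -> passive (channel rho).
Proof.
move=> [st [p [rho_p p_mono]]]; rewrite rho_p in st *.
have [p0 p1] := (diag_stateP p).1 st.
rewrite sum_ord4 in p1.
have p12 := p_mono ket1 ket2 erefl; have p23 := p_mono ket2 ket3 erefl.
have p34 := p_mono ket3 ket4 erefl; have p4 := p0 ket4.
rewrite channel_diag; split.
  apply/diag_stateP; split; first by elim/ord4_ind; rewrite /channel_populations /=; lra.
  by rewrite sum_ord4 /channel_populations /=; lra.
exists (channel_populations p); split => //.
by elim/ord4_ind; elim/ord4_ind; rewrite /channel_populations /= => // _; lra.
Qed.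
End Counterexample.

Theorem mainTheorem2 (R : realType) (E : 'I_4 -> R)
  (hE : forall i j : 'I_4, (i < j)%N -> E i < E j) :
  (forall rho : 'M[R[i]]_4, passive rho -> passive (channel rho)) /\
  ergotropy E (rho0 R) = (E ket4 - E ket2) / 3 /\
  ergotropy E (channel (rho0 R)) = (E ket2 - E ket1) / 9 /\
  (E ket2 - E ket1 > 3 * (E ket4 - E ket2) ->
     (forall rho : 'M[R[i]]_4, passive rho -> passive (channel rho)) /\
     ergotropy E (rho0 R) < ergotropy E (channel (rho0 R))).
Proof.
have monoE (i j : 'I_4) : (i <= j)%N -> E i <= E j.
  by rewrite leq_eqVlt => /orP[/eqP/val_inj -> | /hE/ltW].
have ergo_rho0 : ergotropy E (rho0 R) = (E ket4 - E ket2) / 3.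
  rewrite rho0_diag (ergotropy_diag (s := tperm ket2 ket4)) //; last exact: rho0_rearranged.
  by rewrite !sum_ord4 !permE /rho0_populations /=; lra.
have ergo_out : ergotropy E (channel (rho0 R)) = (E ket2 - E ket1) / 9.
  rewrite rho0_diag channel_diag (ergotropy_diag (s := tperm ket1 ket2)) //.
    by rewrite !sum_ord4 !permE /channel_populations /rho0_populations /=; lra.
  exact: channel_rho0_rearranged.
have passivity := @channel_passive R.
do 3!split => //; move=> gap; split => //.
by rewrite ergo_rho0 ergo_out; lra.
Qed.
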